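(* Let $\bar N_{\rm p}=2^r$ with $r\ge1$ and $N_{\rm p}=\bar N_{\rm p}^2$. Let $\boldsymbol B:=(\boldsymbol H_{\bar N_{\rm p}}\otimes\boldsymbol H_{\bar N_{\rm p}})^*\boldsymbol\Psi_{\rm idhw}\in\mathbb R^{N_{\rm p}\times N_{\rm p}}$. For each $l_{\rm p}=\bar N_{\rm p}(l_{\rm y}-1)+l_{\rm x}$ with $l_{\rm x},l_{\rm y}\in\{1,\dots,\bar N_{\rm p}\}$, define the local coherence $\mu_{l_{\rm p}}:=\max_j|B_{l_{\rm p},j}|$. Then $$\mu_{l_{\rm p}}=\kappa^{\rm p}_{l_{\rm p}}:=\min\{1,2^{-\lfloor\log_2(\max\{l_{\rm x},l_{\rm y}\}-1)\rfloor}\},$$ with the convention $\log_2 0=-\infty$, so that $\kappa^{\rm p}_{l_{\rm p}}=1$ when $l_{\rm x}=l_{\rm y}=1$. Moreover, $$\sum_{l_{\rm p}=1}^{N_{\rm p}}(\kappa^{\rm p}_{l_{\rm p}})^2=1+3\log_2(\bar N_{\rm p}).$$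
   Context: Let $\boldsymbol a=[1,1]^\top$ and $\boldsymbol b=[1,-1]^\top$. Paley-ordered Hadamard matrix: $\boldsymbol H_1=[1]$ and $\boldsymbol H_n=\tfrac1{\sqrt2}[\boldsymbol H_{n/2}\otimes\boldsymbol a,\ \boldsymbol H_{n/2}\otimes\boldsymbol b]$. Haar matrices: $\boldsymbol W_1=[1]$ and $\boldsymbol W_n=\tfrac1{\sqrt2}[\boldsymbol W_{n/2}\otimes\boldsymbol a,\ \boldsymbol I_{n/2}\otimes\boldsymbol b]$. Also $\boldsymbol W^0_1=[1]$ and $\boldsymbol W^0_n=\tfrac1{\sqrt2}[\boldsymbol W^0_{n/2}\otimes\boldsymbol a,\ \boldsymbol I_{n/2}\otimes\boldsymbol a]$. Dyadic levels: $\mathcal T_0=\{1\}$ and $\mathcal T_\ell=\{2^{\ell-1}+1,\dots,2^\ell\}$ for $\ell\ge1$. For an index set $S$, $\boldsymbol A\boldsymbol P_S^\top$ denotes the submatrix of columns of $\boldsymbol A$ indexed by $S$. 2-D isotropic Haar basis: $\boldsymbol\Psi_{\rm idhw}=[\boldsymbol\Psi_0,\boldsymbol\Psi_1,\boldsymbol\Psi_2,\boldsymbol\Psi_3]$, where $\boldsymbol\Psi_0=N_{\rm p}^{-1/2}\boldsymbol 1_{N_{\rm p}}$ and, for $i\in\{1,2,3\}$, $\boldsymbol\Psi_i=[\boldsymbol\Psi_{i,1},\dots,\boldsymbol\Psi_{i,r}]$ with - $\boldsymbol\Psi_{1,\ell}=(\boldsymbol W^0_{\bar N_{\rm p}}\boldsymbol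 P_{\mathcal T_\ell}^\top)\otimes(\boldsymbol W_{\bar N_{\rm p}}\boldsymbol P_{\mathcal T_\ell}^\top)$, - $\boldsymbol\Psi_{2,\ell}=(\boldsymbol W_{\bar N_{\rm p}}\boldsymbol P_{\mathcal T_\ell}^\top)\otimes(\boldsymbol W^0_{\bar N_{\rm p}}\boldsymbol P_{\mathcal T_\ell}^\top)$, - $\boldsymbol\Psi_{3,\ell}=(\boldsymbol W_{\bar N_{\rm p}}\boldsymbol P_{\mathcal T_\ell}^\top)\otimes(\boldsymbol W_{\bar N_{\rm p}}\boldsymbol P_{\mathcal T_\ell}^\top)$. *)

From HB Require Import structures.
From mathcomp Require Import all_boot all_order all_algebra.
Set Implicit Arguments. Unset Strict Implicit. Unset Printing Implicit Defensive.
Import Order.TTheory GRing.Theory Num.Theory.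
Local Open Scope ring_scope.

Lemma kron_divP m p (i : 'I_(m * p)) : (i %/ p < m)%N.
Proof.
case: p i => [|p] [i /= Hi]; first by rewrite muln0 in Hi.
by rewrite ltn_divLR.
Qed.

Lemma kron_modP m p (i : 'I_(m * p)) : (i %% p < p)%N.
Proof.
case: p i => [|p] [i /= Hi]; first by rewrite muln0 in Hi.
by rewrite ltn_mod.
Qed.

Definition kron_hi m p (i : 'I_(m * p)) : 'I_m := Ordinal (kron_divP i).
Definition kron_lo m p (i : 'I_(m * p)) : 'I_p := Ordinal (kron_modP i).

Definition kron (R : pzRingType) m n p q (A : 'M[R]_(m, n)) (B : 'M[R]_(p, q))
  : 'M[R]_(m * p, n * q) :=
  \matrix_(i, j) (A (kron_hi i) (kron_hi j) * B (kron_lo i) (kron_lo j)).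

Definition vec_a (R : pzRingType) : 'cV[R]_2 := \col_i 1.
Definition vec_b (R : pzRingType) : 'cV[R]_2 :=
  \col_(i < 2) (if i == 0 :> nat then 1 else -1).

Lemma dim2S r : (2 ^ r * 2 = 2 ^ r.+1)%N.
Proof. by rewrite expnSr. Qed.
Lemma dim11S r : (2 ^ r * 1 + 2 ^ r * 1 = 2 ^ r.+1)%N.
Proof. by rewrite muln1 addnn -mul2n expnS. Qed.

Definition haar_step (R : rcfType) r (M X : 'M[R]_(2 ^ r)) (c : 'cV[R]_2)
  : 'M[R]_(2 ^ r.+1) :=
  castmx (dim2S r, dim11S r)
    ((Num.sqrt 2)^-1 *: row_mx (kron M (vec_a R)) (kron X c)).

(* Paley-ordered Hadamard matrix H_{2^r} *)
Fixpoint hadamard (R : rcfType) (r : nat) : 'M[R]_(2 ^ r) :=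
  match r with
  | 0 => 1%:M
  | r'.+1 => haar_step (hadamard R r') (hadamard R r') (vec_b R)
  end.

Fixpoint haarW (R : rcfType) (r : nat) : 'M[R]_(2 ^ r) :=
  match r with
  | 0 => 1%:M
  | r'.+1 => haar_step (haarW R r') 1%:M (vec_b R)
  end.

Fixpoint haarW0 (R : rcfType) (r : nat) : 'M[R]_(2 ^ r) :=
  match r with
  | 0 => 1%:M
  | r'.+1 => haar_step (haarW0 R r') 1%:M (vec_a R)
  end.

(* A P_{T_l}^T : list of the columns of A indexed (1-based) by
   T_0 = {1}, T_l = {2^(l-1)+1, ..., 2^l}; i.e. 0-based 2^(l-1) .. 2^l - 1. *)
Definition dyadic_level (l : nat) : seq nat :=
  if l is l'.+1 then iota (2 ^ l') (2 ^ l') else [:: 0%N].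

Definition cols_sel (R : pzRingType) n (A : 'M[R]_n) (S : seq nat) : seq 'cV[R]_n :=
  [seq col j A | j <- filter (fun j : 'I_n => (j : nat) \in S) (enum 'I_n)].

(* Kronecker product (X P^T) ⊗ (Y Q^T) of two column selections, as the list of
   its columns in order: column (i, j) is at position i * #cols(Y) + j. *)
Definition kron_cols (R : pzRingType) n (X Y : seq 'cV[R]_n) : seq 'cV[R]_(n * n) :=
  [seq kron u v | u <- X, v <- Y].

Definition Psi_il (R : rcfType) r (i l : nat) : seq 'cV[R]_(2 ^ r * 2 ^ r) :=
  let W := haarW R r in
  let W0 := haarW0 R r in
  let T := dyadic_level l in
  match i with
  | 1%N => kron_cols (cols_sel W0 T) (cols_sel W T)
  | 2%N => kron_cols (cols_sel W T) (cols_sel W0 T)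
  | _ => kron_cols (cols_sel W T) (cols_sel W T)
  end.

Definition Psi_i (R : rcfType) r (i : nat) : seq 'cV[R]_(2 ^ r * 2 ^ r) :=
  flatten [seq Psi_il R r i l | l <- iota 1 r].

Definition Psi_0 (R : rcfType) r : 'cV[R]_(2 ^ r * 2 ^ r) :=
  const_mx (Num.sqrt ((2 ^ r * 2 ^ r)%N%:R))^-1.

Definition Psi_idhw_cols (R : rcfType) r : seq 'cV[R]_(2 ^ r * 2 ^ r) :=
  Psi_0 R r :: Psi_i R r 1 ++ Psi_i R r 2 ++ Psi_i R r 3.

Definition Psi_idhw (R : rcfType) r : 'M[R]_(2 ^ r * 2 ^ r) :=
  \matrix_(i, j) (nth 0 (Psi_idhw_cols R r) j) i 0.

(* B = (H ⊗ H)^* Psi_idhw  (real entries: ^* is the transpose) *)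
Definition Bmat (R : rcfType) r : 'M[R]_(2 ^ r * 2 ^ r) :=
  (kron (hadamard R r) (hadamard R r))^T *m Psi_idhw R r.

Definition local_coherence (R : rcfType) r (l : 'I_(2 ^ r * 2 ^ r)) : R :=
  \big[Num.max/0]_(j < 2 ^ r * 2 ^ r) `|Bmat R r l j|.

(* kappa for m = max{l_x, l_y} (1-based):
   min{1, 2^{-floor(log2(m-1))}}, with log2 0 = -oo giving 1 when m = 1.
   For m >= 2, floor(log2(m-1)) = trunc_log 2 (m-1). *)
Definition kappa_p (R : rcfType) (m : nat) : R :=
  if (m <= 1)%N then 1
  else Num.min 1 ((2 : R) ^- trunc_log 2 (m - 1)).

From HB Require Import structures.
From mathcomp Require Import all_boot all_order all_algebra.
From mathcomp Require Import zify ring.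
Set Implicit Arguments. Unset Strict Implicit. Unset Printing Implicit Defensive.
Import Order.TTheory GRing.Theory Num.Theory.
Local Open Scope ring_scope.

(* Since (H ⊗ H)^T acts factorwise on the Kronecker columns of Psi_idhw, every entry of B is
   a product of two one-dimensional coefficients <h_k, w_j> or <h_k, w0_j>. Unrolling the
   common recursion of H, W and W0 shows that <h_k, w_j>^2 is 2^(1-L) when k and j lie in the
   same dyadic level L and 0 otherwise, and that <h_k, w0_j>^2 is 2^(1-L) when k lies strictly
   below the level L of j and 0 otherwise. So every entry in the row of (l_y, l_x) has modulus
   0 or 2^(1-M), M the larger level of l_x - 1 and l_y - 1, and 2^(1-M) is attained by a
   level-M column. Level M holds 3 * 4^(M-1) rows, each contributing 4^(1-M) to the sum. *)

Section Kronecker.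

Lemma kron_index_subproof m p (i : 'I_m) (j : 'I_p) : (i * p + j < m * p)%N.
Proof. have := ltn_ord i; have := ltn_ord j; nia. Qed.

Definition kron_index m p (ij : 'I_m * 'I_p) : 'I_(m * p) :=
  Ordinal (kron_index_subproof ij.1 ij.2).

Lemma kron_hi_index m p (i : 'I_m) (j : 'I_p) : kron_hi (kron_index (i, j)) = i.
Proof.
apply: val_inj => /=; have p0 : (0 < p)%N by apply: leq_ltn_trans (ltn_ord j).
by rewrite divnMDl // divn_small // addn0.
Qed.

Lemma kron_lo_index m p (i : 'I_m) (j : 'I_p) : kron_lo (kron_index (i, j)) = j.
Proof. by apply: val_inj; rewrite /= modnMDl modn_small. Qed.

Lemma kron_index_hi_lo m p (k : 'I_(m * p)) : kron_index (kron_hi k, kron_lo k) = k.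
Proof. by apply: val_inj; rewrite /= -divn_eq. Qed.

Lemma sum_kron_index (V : nmodType) m p (F : 'I_m -> 'I_p -> V) :
  \sum_(k < m * p) F (kron_hi k) (kron_lo k) = \sum_(i < m) \sum_(j < p) F i j.
Proof.
rewrite pair_big /= (reindex (@kron_index m p)) /=.
  by apply: eq_bigr => -[i j] _; rewrite kron_hi_index kron_lo_index.
exists (fun k => (kron_hi k, kron_lo k)) => [[i j] _|k _].
  by rewrite kron_hi_index kron_lo_index.
exact: kron_index_hi_lo.
Qed.

Variable R : comPzRingType.

Lemma trmx_kron m n p q (A : 'M[R]_(m, n)) (B : 'M[R]_(p, q)) :
  (kron A B)^T = kron A^T B^T.
Proof. by apply/matrixP => i j; rewrite !mxE. Qed.

Lemma kron_mulmx m n p q s t (A : 'M[R]_(m, n)) (B : 'M[R]_(p, q))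
    (C : 'M[R]_(n, s)) (D : 'M[R]_(q, t)) :
  kron A B *m kron C D = kron (A *m C) (B *m D).
Proof.
apply/matrixP => i j; rewrite !mxE.
under eq_bigr do rewrite !mxE.
rewrite (sum_kron_index (fun a b => A (kron_hi i) a * B (kron_lo i) b *
                                    (C a (kron_hi j) * D b (kron_lo j)))).
rewrite mulr_suml; apply: eq_bigr => a _; rewrite mulr_sumr.
by apply: eq_bigr => b _; rewrite mulrACA.
Qed.

Lemma kron_col_entry n p (x : 'cV[R]_n) (y : 'cV[R]_p) (l : 'I_(n * p)) :
  kron x y l 0 = x (kron_hi l) 0 * y (kron_lo l) 0.
Proof. by rewrite mxE !ord1. Qed.

End Kronecker.

Section HaarEntries.
Variable R : rcfType.
Local Notation s := (Num.sqrt (2 : R))^-1.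

Definition haar_stepN r (M X : nat -> nat -> R) (c : nat -> R) (x k : nat) : R :=
  s * (if (k < 2 ^ r)%N then M (x %/ 2)%N k else X (x %/ 2)%N (k - 2 ^ r)%N * c (x %% 2)%N).

Lemma haar_stepE r (M X : 'M[R]_(2 ^ r)) (c : 'cV[R]_2) (m f : nat -> nat -> R) (g : nat -> R) :
    (forall x k : 'I_(2 ^ r), M x k = m x k) ->
    (forall x k : 'I_(2 ^ r), X x k = f x k) -> (forall i : 'I_2, c i 0 = g i) ->
  forall x k : 'I_(2 ^ r.+1), haar_step M X c x k = haar_stepN r m f g x k.
Proof.
move=> Mm Xf cg x k; rewrite /haar_step /haar_stepN castmxE !mxE.
case: splitP => j /= ->; rewrite !mxE ?Mm ?Xf ?ord1 /=.
- by rewrite [in RHS](_ : (j < 2 ^ r)%N) ?divn1 ?mulr1 // -[X in (_ < X)%N]muln1.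
- rewrite cg ifN; last by lia.
  have -> : (2 ^ r * 1 + j - 2 ^ r = j)%N by lia.
  by rewrite divn1.
Qed.

Definition deltaN (x k : nat) : R := (x == k)%:R.

Fixpoint hadamardN r : nat -> nat -> R :=
  if r is r'.+1 then haar_stepN r' (hadamardN r') (hadamardN r') (fun e => (-1) ^+ e)
  else fun _ _ => 1.

Fixpoint haarN r : nat -> nat -> R :=
  if r is r'.+1 then haar_stepN r' (haarN r') deltaN (fun e => (-1) ^+ e)
  else fun _ _ => 1.

Fixpoint haar0N r : nat -> nat -> R :=
  if r is r'.+1 then haar_stepN r' (haar0N r') deltaN (fun _ => 1)
  else fun _ _ => 1.

Lemma vec_aE (i : 'I_2) : vec_a R i 0 = 1.
Proof. by rewrite mxE. Qed.

Lemma vec_bE (i : 'I_2) : vec_b R i 0 = (-1) ^+ i.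
Proof. by rewrite mxE; case: i => -[|[|]]. Qed.

Lemma scalar1_mxE n (x k : 'I_n) : (1%:M : 'M[R]_n) x k = deltaN x k.
Proof. by rewrite mxE. Qed.

Lemma dim1_mxE (x k : 'I_(2 ^ 0)) : (1%:M : 'M[R]_(2 ^ 0)) x k = 1.
Proof. by rewrite mxE; case: x k => [[|x] Hx] [[|k] Hk]. Qed.

Lemma hadamardE r (x k : 'I_(2 ^ r)) : hadamard R r x k = hadamardN r x k.
Proof.
elim: r x k => [|r IH] x k; first exact: dim1_mxE.
by apply: haar_stepE => // i; rewrite vec_bE.
Qed.

Lemma haarWE r (x k : 'I_(2 ^ r)) : haarW R r x k = haarN r x k.
Proof.
elim: r x k => [|r IH] x k; first exact: dim1_mxE.
by apply: haar_stepE => // *; rewrite (scalar1_mxE, vec_bE).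
Qed.

Lemma haarW0E r (x k : 'I_(2 ^ r)) : haarW0 R r x k = haar0N r x k.
Proof.
elim: r x k => [|r IH] x k; first exact: dim1_mxE.
by apply: haar_stepE => // *; rewrite (scalar1_mxE, vec_aE).
Qed.

End HaarEntries.

Section HaarCoefficients.
Variable R : rcfType.
Local Notation s := (Num.sqrt (2 : R))^-1.

Lemma sqr_invsqrt2 : s * s = 2^-1.
Proof. by rewrite -invfM -expr2 sqr_sqrtr. Qed.

Lemma invsqrt2_pairE (a b c d : R) : s * a * (s * b) + s * c * (s * d) = (a * b + c * d) / 2.
Proof. by rewrite [s * a * _]mulrACA [s * c * _]mulrACA sqr_invsqrt2 -mulrDr mulrC. Qed.

Lemma eq_divr2 (x y : R) : x = y * 2 -> x / 2 = y.
Proof. by move=> ->; rewrite mulfK ?pnatr_eq0. Qed.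

Lemma sum_nat_pairs n (F : nat -> R) :
  \sum_(0 <= x < 2 * n) F x = \sum_(0 <= y < n) (F (2 * y)%N + F (2 * y + 1)%N).
Proof.
elim: n => [|n IH]; first by rewrite !big_geq.
rewrite (_ : (2 * n.+1 = (2 * n).+2)%N) ?big_nat_recr //= ?IH ?addrA; last lia.
by do 2 f_equal; lia.
Qed.

Lemma sum_nat_deltaN n j (f : nat -> R) : (j < n)%N ->
  \sum_(0 <= x < n) deltaN R x j * f x = f j.
Proof.
move=> ltjn; rewrite big_mkord (bigD1 (Ordinal ltjn)) //= /deltaN eqxx mul1r.
rewrite big1 ?addr0 // => i /negbTE neq_ij.
by rewrite (_ : (i == j :> nat) = false) ?mul0r.
Qed.

Definition dotN r (f g : nat -> nat -> R) k j := \sum_(0 <= x < 2 ^ r) f x k * g x j.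

Local Notation hw_dot r := (dotN r (hadamardN R r) (haarN R r)).
Local Notation hw0_dot r := (dotN r (hadamardN R r) (haar0N R r)).

Lemma hadamardN_sqr r x k : hadamardN R r x k ^+ 2 = 2^-1 ^+ r.
Proof.
elim: r x k => [|r IH] x k /=; first by rewrite expr1n.
have sqr_s : s ^+ 2 = 2^-1 by rewrite expr2 sqr_invsqrt2.
rewrite /haar_stepN [in RHS]exprS exprMn sqr_s; case: ifP => _; first by rewrite IH.
by rewrite exprMn IH -exprM mulnC exprM sqrrN !expr1n mulr1.
Qed.

Lemma hw_dotS r k j : (j < 2 ^ r.+1)%N ->
  hw_dot r.+1 k j =
    if (k < 2 ^ r)%N then (if (j < 2 ^ r)%N then hw_dot r k j else 0)
    else (if (j < 2 ^ r)%N then 0 else hadamardN R r (j - 2 ^ r) (k - 2 ^ r)).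
Proof.
move=> ltj; rewrite /dotN expnS sum_nat_pairs /= /haar_stepN.
have d0 y : ((2 * y) %/ 2 = y)%N by lia.
have d1 y : ((2 * y + 1) %/ 2 = y)%N by lia.
have m0 y : ((2 * y) %% 2 = 0)%N by lia.
have m1 y : ((2 * y + 1) %% 2 = 1)%N by lia.
case: ifP => ltk; case: ifP => ltj'.
- by apply: eq_bigr => y _; rewrite !d0 !d1 invsqrt2_pairE; apply: eq_divr2; ring.
- by apply: big1 => y _; rewrite !d0 !d1 !m0 !m1; ring.
- by apply: big1 => y _; rewrite !d0 !d1 !m0 !m1; ring.
- rewrite -(@sum_nat_deltaN (2 ^ r) (j - 2 ^ r) (fun x => hadamardN R r x (k - 2 ^ r)%N));
    last first.
    by rewrite expnS in ltj; lia.
  by apply: eq_bigr => y _; rewrite !d0 !d1 !m0 !m1 invsqrt2_pairE; apply: eq_divr2; ring.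
Qed.

Lemma hw0_dotS r k j : (j < 2 ^ r.+1)%N ->
  hw0_dot r.+1 k j =
    if (k < 2 ^ r)%N then (if (j < 2 ^ r)%N then hw0_dot r k j else hadamardN R r (j - 2 ^ r) k)
    else 0.
Proof.
move=> ltj; rewrite /dotN expnS sum_nat_pairs /= /haar_stepN.
have d0 y : ((2 * y) %/ 2 = y)%N by lia.
have d1 y : ((2 * y + 1) %/ 2 = y)%N by lia.
have m0 y : ((2 * y) %% 2 = 0)%N by lia.
have m1 y : ((2 * y + 1) %% 2 = 1)%N by lia.
case: ifP => ltk; first case: ifP => ltj'.
- by apply: eq_bigr => y _; rewrite !d0 !d1 invsqrt2_pairE; apply: eq_divr2; ring.
- rewrite -(@sum_nat_deltaN (2 ^ r) (j - 2 ^ r) (fun x => hadamardN R r x k)); last first.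
    by rewrite expnS in ltj; lia.
  by apply: eq_bigr => y _; rewrite !d0 !d1 invsqrt2_pairE; apply: eq_divr2; ring.
- by apply: big1 => y _; rewrite !d0 !d1 !m0 !m1; ring.
Qed.

(* [level k = L] iff the 1-based index [k + 1] lies in T_L. *)
Definition level (k : nat) : nat := up_log 2 k.+1.

(* Levels 0 and 1 both have weight 1. *)
Definition level_weight (L : nat) : R := 2^-1 ^+ L.-1.

Lemma level0 : level 0 = 0%N.
Proof. exact: up_log1. Qed.

Lemma level_eq0 k : (level k == 0%N) = (k == 0%N).
Proof. by rewrite /level up_log_eq0 /= ltnS leqn0. Qed.

Lemma leq_level m n : (m <= n)%N -> (level m <= level n)%N.
Proof. by move=> le_mn; apply: leq_up_log. Qed.

Lemma level_ltexp r k : (k < 2 ^ r)%N -> (level k <= r)%N.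
Proof. exact: up_log_min. Qed.

Lemma level_dyadic r k : (2 ^ r <= k < 2 ^ r.+1)%N -> level k = r.+1.
Proof. by move=> k_r; apply: up_log_eq => //; rewrite ltnS. Qed.

Lemma hw_dot_sqr r k j : (k < 2 ^ r)%N -> (j < 2 ^ r)%N ->
  hw_dot r k j ^+ 2 = (level k == level j)%:R * level_weight (level j).
Proof.
elim: r k j => [|r IH] k j ltk ltj.
  move: ltk ltj; rewrite !ltnS !leqn0 => /eqP -> /eqP ->.
  by rewrite /dotN big_nat1 level0 /= !mul1r expr1n.
rewrite hw_dotS //.
have [ltk'|gek] := ltnP k (2 ^ r); have [ltj'|gej] := ltnP j (2 ^ r).
- exact: IH.
- rewrite (@level_dyadic r j) ?gej // expr0n (_ : (level k == r.+1) = false) ?mul0r //.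
  by have := level_ltexp ltk'; lia.
- rewrite (@level_dyadic r k) ?gek // expr0n (_ : (r.+1 == level j) = false) ?mul0r //.
  by have := level_ltexp ltj'; lia.
- by rewrite hadamardN_sqr !(@level_dyadic r) ?gek ?gej // eqxx mul1r.
Qed.

Lemma hw0_dot_sqr r k j : (k < 2 ^ r)%N -> (0 < j < 2 ^ r)%N ->
  hw0_dot r k j ^+ 2 = (level k < level j)%:R * level_weight (level j).
Proof.
elim: r k j => [|r IH] k j ltk /andP [j_gt0 ltj].
  by move: ltj j_gt0; rewrite ltnS leqn0 => /eqP ->.
rewrite hw0_dotS //.
have [ltk'|gek] := ltnP k (2 ^ r); have [ltj'|gej] := ltnP j (2 ^ r).
- by apply: IH; rewrite ?j_gt0.
- rewrite hadamardN_sqr (@level_dyadic r j) ?gej // (_ : (level k < r.+1)%N) ?mul1r //.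
  by have := level_ltexp ltk'; lia.
- rewrite (@level_dyadic r k) ?gek // expr0n (_ : (r.+1 < level j)%N = false) ?mul0r //.
  by have := level_ltexp ltj'; lia.
- by rewrite !(@level_dyadic r) ?gek ?gej // ltnn expr0n mul0r.
Qed.

End HaarCoefficients.

Section Columns.
Variable R : rcfType.

Definition psi_left r (i : nat) : 'M[R]_(2 ^ r) := if i == 1%N then haarW0 R r else haarW R r.
Definition psi_right r (i : nat) : 'M[R]_(2 ^ r) := if i == 2%N then haarW0 R r else haarW R r.

(* Psi_0 is the level-0 member of the third family, since column 0 of W is constant. *)
Definition psi_index r (i L : nat) : bool :=
  (L == 0%N) && (i == 3%N) || (0 < L <= r)%N && (i \in [:: 1; 2; 3]%N).

Lemma Psi_ilE r i l : Psi_il R r i l =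
  kron_cols (cols_sel (psi_left r i) (dyadic_level l)) (cols_sel (psi_right r i) (dyadic_level l)).
Proof. by rewrite /Psi_il /psi_left /psi_right; case: i => [|[|[|i]]]. Qed.

Lemma haarN_col0 r x : haarN R r x 0 = (Num.sqrt 2)^-1 ^+ r.
Proof. by elim: r x => [|r IH] x //=; rewrite /haar_stepN expn_gt0 IH exprS. Qed.

Lemma Psi_0E r (u : 'I_(2 ^ r)) : (u : nat) = 0%N ->
  Psi_0 R r = kron (col u (haarW R r)) (col u (haarW R r)).
Proof.
move=> u0; apply/matrixP => m j; rewrite !mxE !haarWE u0 !haarN_col0 -exprMn.
rewrite -invfM -expr2 sqr_sqrtr // natrM -expr2 sqrtr_sqr ger0_norm ?ler0n //.
by rewrite natrX exprVn.
Qed.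

Lemma mem_cols_sel n (A : 'M[R]_n) T c :
  c \in cols_sel A T -> exists2 u : 'I_n, (u : nat) \in T & c = col u A.
Proof. by case/mapP => u; rewrite mem_filter => /andP [Tu _] ->; exists u. Qed.

Lemma cols_sel_mem n (A : 'M[R]_n) T (u : 'I_n) :
  (u : nat) \in T -> col u A \in cols_sel A T.
Proof. by move=> Tu; apply: map_f; rewrite mem_filter Tu mem_enum. Qed.

Lemma size_cols_sel n (A : 'M[R]_n) T :
  uniq T -> all (fun j => j < n)%N T -> size (cols_sel A T) = size T.
Proof.
move=> uniqT /allP Tn; rewrite size_map -(size_map val).
have -> : map val (filter (fun j : 'I_n => (j : nat) \in T) (enum 'I_n)) =
          [seq j <- iota 0 n | j \in T].
  by rewrite -val_enum_ord [RHS]filter_map.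
apply: perm_size; apply: uniq_perm; rewrite ?filter_uniq ?iota_uniq // => j.
by rewrite mem_filter mem_iota /=; case: (boolP (j \in T)) => // /Tn.
Qed.

Definition psi_column r (c : 'cV[R]_(2 ^ r * 2 ^ r)) : Prop :=
  exists i L (u v : 'I_(2 ^ r)),
    [/\ psi_index r i L, (u : nat) \in dyadic_level L, (v : nat) \in dyadic_level L
      & c = kron (col u (psi_left r i)) (col v (psi_right r i))].

Lemma mem_Psi_idhw_cols r c : c \in Psi_idhw_cols R r -> psi_column c.
Proof.
have n_gt0 : (0 < 2 ^ r)%N by rewrite expn_gt0.
rewrite inE => /orP [/eqP -> | ].
  exists 3%N, 0%N, (Ordinal n_gt0), (Ordinal n_gt0); split => //.
  exact: Psi_0E.
have fam i : c \in Psi_i R r i -> i \in [:: 1; 2; 3]%N -> psi_column c.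
  case/flatten_mapP => L; rewrite mem_iota Psi_ilE => L_r.
  case/allpairsP => -[x y] [/= /mem_cols_sel [u Tu ->] /mem_cols_sel [v Tv ->] ->] i123.
  by exists i, L, u, v; split => //; rewrite /psi_index i123 andbT orbC; apply/orP; left; lia.
by rewrite !mem_cat => /or3P [] /fam; apply.
Qed.

Lemma Psi_idhw_cols_mem r i L (u v : 'I_(2 ^ r)) : psi_index r i L ->
    (u : nat) \in dyadic_level L -> (v : nat) \in dyadic_level L ->
  kron (col u (psi_left r i)) (col v (psi_right r i)) \in Psi_idhw_cols R r.
Proof.
case/orP => [/andP [/eqP L0 /eqP ->] | /andP [L_r i123]] Tu Tv.
  move: Tu Tv; rewrite L0 !inE => /eqP u0 /eqP v0.
  have -> : v = u by apply: val_inj; rewrite /= u0 v0.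
  by rewrite /psi_left /psi_right /= -Psi_0E // eqxx.
have Psi_i_mem : kron (col u (psi_left r i)) (col v (psi_right r i)) \in Psi_i R r i.
  apply/flatten_mapP; exists L; first by rewrite mem_iota; lia.
  by rewrite Psi_ilE; apply: allpairs_f; apply: cols_sel_mem.
by rewrite inE !mem_cat; move: i123 Psi_i_mem; rewrite !inE => /or3P [] /eqP -> ->; rewrite ?orbT.
Qed.

Lemma size_Psi_i r i :
  size (Psi_i R r i) = sumn [seq (2 ^ L.-1 * 2 ^ L.-1)%N | L <- iota 1 r].
Proof.
rewrite size_flatten /shape -map_comp; congr sumn; apply/eq_in_map => -[|L].
  by rewrite mem_iota.
rewrite mem_iota => L_r /=; rewrite Psi_ilE size_allpairs !size_cols_sel ?size_iota ?iota_uniq //;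
  apply/allP => j; rewrite mem_iota => /andP [_ ltj];
  apply: leq_trans ltj _; rewrite addnn -mul2n -expnS leq_exp2l //; lia.
Qed.

Lemma size_Psi_idhw_cols r : size (Psi_idhw_cols R r) = (2 ^ r * 2 ^ r)%N.
Proof.
rewrite /= !size_cat !size_Psi_i.
elim: r => [|r IH] //.
have -> : iota 1 r.+1 = iota 1 r ++ [:: r.+1] by rewrite -(addn1 r) iotaD add1n addn1.
rewrite map_cat sumn_cat /= !expnS; lia.
Qed.

End Columns.

(* The rows, with levels a and b, on which a level-L column of family i is nonzero. *)
Definition psi_sel (i a b L : nat) : bool :=
  match i with
  | 1 => (a < L) && (b == L)
  | 2 => (a == L) && (b < L)
  | _ => (a == L) && (b == L)
  end%N.

Definition psi_witness (a b : nat) : nat := if (a < b)%N then 1 else if (b < a)%N then 2 else 3.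

Lemma psi_sel_maxn i a b L : psi_sel i a b L -> L = maxn a b.
Proof. by case: i => [|[|[|i]]] /andP [h1 h2]; lia. Qed.

Lemma psi_sel_witness a b : psi_sel (psi_witness a b) a b (maxn a b).
Proof. by rewrite /psi_witness; case: ltngtP => h /=; apply/andP; split; lia. Qed.

Lemma psi_index_witness r a b : (a <= r)%N -> (b <= r)%N ->
  psi_index r (psi_witness a b) (maxn a b).
Proof.
move=> a_r b_r; rewrite /psi_index /psi_witness.
by case: ltngtP => h /=; apply/orP; [right|right|]; rewrite ?inE ?eqxx ?andbT //; lia.
Qed.

Definition dyadic_first (L : nat) : nat := if L is L'.+1 then 2 ^ L' else 0.

Lemma dyadic_first_mem L : dyadic_first L \in dyadic_level L.
Proof.
case: L => [|L] //=; rewrite mem_iota leqnn /=.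
have pos : (0 < 2 ^ L)%N by rewrite expn_gt0.
lia.
Qed.

Lemma dyadic_first_lt r L : (L <= r)%N -> (dyadic_first L < 2 ^ r)%N.
Proof. by case: L => [|L] /= L_r; rewrite ?expn_gt0 // ltn_exp2l. Qed.

Lemma level_dyadic_level L u : u \in dyadic_level L -> level u = L.
Proof.
case: L => [|L] /=; first by rewrite inE => /eqP ->; exact: level0.
by rewrite mem_iota => Tu; apply: level_dyadic; rewrite expnS; lia.
Qed.

Lemma level_maxn m n : level (maxn m n) = maxn (level m) (level n).
Proof.
case: (leqP m n) => mn; first by rewrite !(maxn_idPr _) // leq_level.
by rewrite !(maxn_idPl _) // leq_level // ltnW.
Qed.

Section Coherence.
Variable R : rcfType.
Local Notation H r := (hadamard R r).

Lemma Bmat_colE r l j :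
  Bmat R r l j = ((kron (H r) (H r))^T *m nth 0 (Psi_idhw_cols R r) j) l 0.
Proof. by rewrite !mxE; apply: eq_bigr => m _; rewrite !mxE. Qed.

Lemma hadamard_col_coef r (A : 'M[R]_(2 ^ r)) (a : nat -> nat -> R) (k u : 'I_(2 ^ r)) :
    (forall x j : 'I_(2 ^ r), A x j = a x j) ->
  ((H r)^T *m col u A) k 0 = dotN r (hadamardN R r) a k u.
Proof.
by move=> Aa; rewrite mxE /dotN big_mkord; apply: eq_bigr => x _; rewrite !mxE hadamardE Aa.
Qed.

Lemma norm_sqr_eq (e K : R) : 0 <= K -> e ^+ 2 = K ^+ 2 -> `|e| = K.
Proof. by move=> K_ge0 eK; rewrite -sqrtr_sqr eK sqrtr_sqr ger0_norm. Qed.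

Lemma mul_sel_sqr (b1 b2 : bool) (w : R) : b1%:R * w * (b2%:R * w) = ((b1 && b2)%:R * w) ^+ 2.
Proof. by case: b1 b2 => [] []; rewrite /= ?mul1r ?mul0r ?expr2 ?mul0r ?mulr0. Qed.

Lemma level_weight_ge0 L : 0 <= level_weight R L.
Proof. by rewrite exprn_ge0 ?invr_ge0 ?ler0n. Qed.

Lemma norm_psi_coef r (l : 'I_(2 ^ r * 2 ^ r)) i L (u v : 'I_(2 ^ r)) :
    psi_index r i L -> (u : nat) \in dyadic_level L -> (v : nat) \in dyadic_level L ->
  `|((kron (H r) (H r))^T *m kron (col u (psi_left R r i)) (col v (psi_right R r i))) l 0|
    = (psi_sel i (level (kron_hi l)) (level (kron_lo l)) L)%:R * level_weight R L.
Proof.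
move=> iL /level_dyadic_level lu /level_dyadic_level lv.
have i123 : i \in [:: 1; 2; 3]%N by case/orP: iL => /andP [] // _ /eqP ->.
have L_gt0 : i != 3%N -> (0 < L)%N.
  by move=> i3; move: iL; rewrite /psi_index (negbTE i3) andbF => /andP [/andP []].
have pos (w : 'I_(2 ^ r)) : level w = L -> i != 3%N -> (0 < w < 2 ^ r)%N.
  by move=> lw /L_gt0; rewrite ltn_ord andbT -lw !lt0n level_eq0.
rewrite trmx_kron kron_mulmx kron_col_entry.
apply: norm_sqr_eq; first by rewrite mulr_ge0 ?ler0n ?level_weight_ge0.
move: i123 pos; rewrite !inE => /or3P [] /eqP -> pos; rewrite /psi_left /psi_right /=.
- rewrite (hadamard_col_coef _ _ (@haarW0E R r)) (hadamard_col_coef _ _ (@haarWE R r)).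
  by rewrite exprMn hw0_dot_sqr ?pos // hw_dot_sqr // lu lv mul_sel_sqr.
- rewrite (hadamard_col_coef _ _ (@haarWE R r)) (hadamard_col_coef _ _ (@haarW0E R r)).
  by rewrite exprMn hw_dot_sqr // hw0_dot_sqr ?pos // lu lv mul_sel_sqr.
- rewrite !(hadamard_col_coef _ _ (@haarWE R r)).
  by rewrite exprMn !hw_dot_sqr // lu lv mul_sel_sqr.
Qed.

Lemma psi_coef_attains r (l : 'I_(2 ^ r * 2 ^ r)) :
  exists2 c, c \in Psi_idhw_cols R r &
    `|((kron (H r) (H r))^T *m c) l 0|
      = level_weight R (maxn (level (kron_hi l)) (level (kron_lo l))).
Proof.
set a := level (kron_hi l); set b := level (kron_lo l).
have M_r : (maxn a b <= r)%N by rewrite geq_max !level_ltexp.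
pose u := Ordinal (dyadic_first_lt M_r); pose i := psi_witness a b.
have iM : psi_index r i (maxn a b) by apply: psi_index_witness; rewrite level_ltexp.
exists (kron (col u (psi_left R r i)) (col u (psi_right R r i))).
  by apply: (Psi_idhw_cols_mem _ iM); apply: dyadic_first_mem.
by rewrite (norm_psi_coef l iM) ?dyadic_first_mem // psi_sel_witness mul1r.
Qed.

Lemma norm_Bmat_le r l j :
  `|Bmat R r l j| <= level_weight R (maxn (level (kron_hi l)) (level (kron_lo l))).
Proof.
have : nth 0 (Psi_idhw_cols R r) j \in Psi_idhw_cols R r.
  by rewrite mem_nth // size_Psi_idhw_cols.
case/mem_Psi_idhw_cols => i [L [u [v [iL Tu Tv c_eq]]]].
rewrite Bmat_colE c_eq (norm_psi_coef l iL) //.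
by case: (boolP (psi_sel _ _ _ _)) => [/psi_sel_maxn <-|_]; rewrite ?mul1r ?mul0r ?level_weight_ge0.
Qed.

Lemma local_coherenceE r (l : 'I_(2 ^ r * 2 ^ r)) :
  @local_coherence R r l = level_weight R (maxn (level (kron_hi l)) (level (kron_lo l))).
Proof.
apply/eqP; rewrite eq_le; apply/andP; split.
  apply: (big_ind (fun x => x <= _)); first exact: level_weight_ge0.
    by move=> x y; rewrite ge_max => -> ->.
  by move=> j _; apply: norm_Bmat_le.
have [c Pc <-] := psi_coef_attains l.
have lt_c : (index c (Psi_idhw_cols R r) < 2 ^ r * 2 ^ r)%N.
  by rewrite -[X in (_ < X)%N](size_Psi_idhw_cols R r) index_mem.
by rewrite /local_coherence (bigD1 (Ordinal lt_c)) //= Bmat_colE nth_index // le_max lexx.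
Qed.

End Coherence.

Section Kappa.
Variable R : rcfType.

Lemma kappa_pE m : kappa_p R m.+1 = level_weight R (level m).
Proof.
rewrite /kappa_p ltnS leqn0 subn1 /=; case: eqP => [->|/eqP m0]; first by rewrite level0.
rewrite /level_weight -trunc_log_up_log ?lt0n // exprVn min_r // -exprVn.
by rewrite exprn_ile1 ?invr_ge0 ?ler0n ?invf_le1 ?ler1n.
Qed.

Lemma sum_level_weight_sqr r :
  \sum_(0 <= y < 2 ^ r) \sum_(0 <= x < 2 ^ r) level_weight R (level (maxn x y)) ^+ 2
    = 1 + 3 * r%:R.
Proof.
elim: r => [|r IH].
  by rewrite expn0 !big_nat1 maxnn level0 expr1n mulr0 addr0.
set n := (2 ^ r)%N; set c := (2^-1 ^+ r : R) ^+ 2.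
have e2 : (2 ^ r.+1 = n + n)%N by rewrite expnS /n; lia.
have cnn : c *+ (n * n) = 1.
  rewrite -mulr_natr natrM -expr2 /n natrX -!exprMn mulVf ?pnatr_eq0 //.
  by rewrite !expr1n.
have top x y : (x < n + n)%N -> (y < n + n)%N -> (n <= maxn x y)%N ->
    level_weight R (level (maxn x y)) ^+ 2 = c.
  by move=> *; rewrite (@level_dyadic r) // -/n expnS; apply/andP; split; lia.
rewrite e2 (big_cat_nat _ (n := n)) ?leq_addr //=.
rewrite (eq_big_nat _ _
  (F2 := fun y => \sum_(0 <= x < n) level_weight R (level (maxn x y)) ^+ 2 + c *+ n)); last first.
  move=> y /andP [_ ltyn]; rewrite (big_cat_nat _ (n := n)) ?leq_addr //=; congr (_ + _).
  rewrite -[n in c *+ n](addnK n n) -sumr_const_nat.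
  by apply: eq_big_nat => x /andP [gexn ltx]; apply: top; lia.
rewrite (@eq_big_nat _ _ _ n (n + n) _ (fun _ => c *+ (n + n))); last first.
  move=> y /andP [geyn lty].
  transitivity (\sum_(0 <= x < n + n) c); last by rewrite sumr_const_nat subn0.
  by apply: eq_big_nat => x /andP [_ ltx]; apply: top; lia.
rewrite big_split /= IH !sumr_const_nat subn0 addnK -!mulrnA mulnDl mulrnDr cnn.
by rewrite -natr1; ring.
Qed.

End Kappa.

Theorem mainTheorem2 (R : rcfType) (r : nat) (hr : (1 <= r)%N) :
  (forall (lx ly : 'I_(2 ^ r)) (l : 'I_(2 ^ r * 2 ^ r)),
      (l : nat) = (2 ^ r * ly + lx)%N ->
      @local_coherence R r l = @kappa_p R (maxn lx.+1 ly.+1))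
  /\
  \sum_(ly < 2 ^ r) \sum_(lx < 2 ^ r) (@kappa_p R (maxn lx.+1 ly.+1)) ^+ 2
    = 1 + 3 * r%:R.
Proof.
split.
  move=> lx ly l l_eq.
  have -> : l = kron_index (ly, lx) by apply: val_inj; rewrite /= l_eq mulnC.
  by rewrite local_coherenceE kron_hi_index kron_lo_index maxnSS kappa_pE level_maxn maxnC.
rewrite -(sum_level_weight_sqr R r) big_mkord; apply: eq_bigr => y _.
by rewrite big_mkord; apply: eq_bigr => x _; rewrite maxnSS kappa_pE.
Qed.
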